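(* A connected graph $G$ is well-bicovered with $b(G)=3$ if and only if $G$ is obtained by taking a complete graph $K_n$ with $n\ge 2$ and attaching a pendant edge (a new vertex adjacent only to that vertex) to one vertex of $K_n$.
   Context: All graphs are finite and simple; ''subgraph'' means induced subgraph. $b(G)$ denotes the maximum order of an induced bipartite subgraph of $G$. $G$ is well-bicovered if every vertex-inclusion-maximal induced bipartite subgraph of $G$ has the same order. *)

From mathcomp Require Import all_boot.
Set Implicit Arguments. Unset Strict Implicit. Unset Printing Implicit Defensive.

(* A finite simple graph: vertex type T : finType, adjacency e : rel T,
   assumed symmetric and irreflexive (hypotheses of the theorem). *)

Section Graphs.
Variables (T : finType) (e : rel T).

Definition induced_bipartite (S : {set T}) : bool :=
  [exists c : {ffun T -> bool},
     [forall x in S, forall y in S, e x y ==> (c x != c y)]].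

Definition maximal_bipartite (S : {set T}) : Prop :=
  induced_bipartite S /\
  forall S' : {set T}, S \subset S' -> induced_bipartite S' -> S' = S.

Definition bip_num : nat :=
  \max_(S : {set T} | induced_bipartite S) #|S|.

Definition well_bicovered : Prop :=
  forall S1 S2 : {set T}, maximal_bipartite S1 -> maximal_bipartite S2 ->
    #|S1| = #|S2|.

Definition connected_graph : Prop := forall x y : T, connect e x y.

End Graphs.

(* K_n with a pendant edge, on vertex set 'I_n.+1: vertices 0..n-1 form K_n,
   vertex n is pendant, adjacent only to vertex 0. *)
Definition Kn_pendant (n : nat) : rel 'I_n.+1 :=
  fun i j => (i != j) &&
    [|| (i < n) && (j < n),
        (i == n :> nat) && (j == 0 :> nat)
      | (j == n :> nat) && (i == 0 :> nat)].

Arguments Kn_pendant n : clear implicits.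

Definition isomorphic {T U : finType} (e : rel T) (f : rel U) : Prop :=
  exists phi : T -> U, bijective phi /\ forall x y, e x y = f (phi x) (phi y).

From mathcomp Require Import all_boot perm.
Set Implicit Arguments. Unset Strict Implicit. Unset Printing Implicit Defensive.

(* If G is well-bicovered with b(G) = 3, two disjoint non-edges would span an
   induced bipartite graph on four vertices, and so would three pairwise
   non-adjacent vertices together with a neighbour of one of them.  Hence the
   non-edges of G form an intersecting triangle-free family, i.e. a star with
   centre p, and G - p is complete.  Each neighbour of p is then universal, and
   two universal vertices x, y would make {x, y} a maximal induced bipartite set
   of size 2 beside one of size 3; so p is pendant.  Conversely, in K_n with a
   pendant vertex p a vertex set is bipartite iff it has at most two vertices
   other than p, so all maximal ones have three vertices. *)

Lemma exists_notin (T : finType) (A : {set T}) : #|A| < #|T| -> exists x, x \notin A.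
Proof.
move=> ltAT; have /properP[_ [x _ xNA]] : A \proper setT.
  by rewrite properEcard subsetT cardsT.
by exists x.
Qed.

Section AnyRelation.
Variables (T : finType) (e : rel T).

Lemma induced_bipartiteP (S : {set T}) :
  reflect (exists c : T -> bool, {in S &, forall x y, e x y -> c x != c y})
          (induced_bipartite e S).
Proof.
apply: (iffP existsP) => [[c /forall_inP cP] | [c cP]].
  by exists c => x y xS yS; apply/implyP/(forall_inP (cP x xS)).
exists [ffun x => c x]; apply/forall_inP => x xS; apply/forall_inP => y yS.
by apply/implyP; rewrite !ffunE; apply: cP.
Qed.

Lemma induced_bipartite_triangle (S : {set T}) x y z : induced_bipartite e S ->
  x \in S -> y \in S -> z \in S -> e x y -> e y z -> e x z -> False.
Proof.
case/induced_bipartiteP=> c cP xS yS zS exy eyz exz.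
move: (cP x y xS yS exy) (cP y z yS zS eyz) (cP x z xS zS exz).
by case: (c x) (c y) (c z) => [] [] [].
Qed.

Lemma card_le_bip_num (S : {set T}) : induced_bipartite e S -> #|S| <= bip_num e.
Proof. exact: (@leq_bigmax_cond _ (induced_bipartite e) (fun S => #|S|)). Qed.

Lemma bip_num_le m :
  (forall S : {set T}, induced_bipartite e S -> #|S| <= m) -> bip_num e <= m.
Proof. by move/bigmax_leqP. Qed.

Lemma maximal_bipartite_card (S : {set T}) :
  induced_bipartite e S -> bip_num e <= #|S| -> maximal_bipartite e S.
Proof.
move=> bS leS; split=> // S' sSS' bS'; apply/eqP; rewrite eq_sym eqEcard sSS'.
exact: leq_trans (card_le_bip_num bS') leS.
Qed.

Lemma exists_maximal_bipartite :
  exists S : {set T}, maximal_bipartite e S /\ #|S| = bip_num e.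
Proof.
have bip0 : induced_bipartite e set0.
  by apply/induced_bipartiteP; exists xpred0 => x; rewrite inE.
have /(eq_bigmax_cond (fun S : {set T} => #|S|))[S bS eqS] : 0 < #|induced_bipartite e|.
  by apply/card_gt0P; exists set0.
by exists S; split=> //; apply: maximal_bipartite_card; rewrite // /bip_num eqS.
Qed.

Lemma maximal_bipartite_setU1 (S : {set T}) z :
  maximal_bipartite e S -> induced_bipartite e (z |: S) -> z \in S.
Proof. by case=> _ maxS /(maxS _ (subsetUr _ _)) <-; rewrite setU11. Qed.

Lemma connected_neighbour x y : connected_graph e -> x != y -> exists z, e x z.
Proof.
move=> conn; have [[_ -> | z q /= /andP[exz _] _]] := connectP (conn x y).
  by rewrite eqxx.
by exists z.
Qed.

End AnyRelation.

Definition clique_pendant (T : finType) (p u : T) : rel T :=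
  fun x y => (x != y) && if x == p then y == u else if y == p then x == u else true.

Section SimpleGraph.
Variables (T : finType) (e : rel T).
Hypotheses (e_sym : symmetric e) (e_irr : irreflexive e).

Definition independent (A : {set T}) : bool :=
  [forall x in A, forall y in A, ~~ e x y].

Lemma independentP (A : {set T}) :
  reflect {in A &, forall x y, ~~ e x y} (independent A).
Proof.
apply: (iffP forall_inP) => [iA x y xA | iA x xA].
  by move/forall_inP: (iA x xA); apply.
by apply/forall_inP => y; apply: iA.
Qed.

Lemma independentS (A B : {set T}) : A \subset B -> independent B -> independent A.
Proof.
move=> /subsetP sAB /independentP iB; apply/independentP => x y /sAB xB /sAB.
exact: iB.
Qed.

Lemma independent_card_le1 (A : {set T}) : #|A| <= 1 -> independent A.
Proof.
by move=> /card_le1_eqP A1; apply/independentP => x y xA yA; rewrite (A1 x y xA yA) e_irr.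
Qed.

Lemma independent1 x : independent [set x].
Proof. by apply: independent_card_le1; rewrite cards1. Qed.

Lemma independentU1 x (A : {set T}) :
  {in A, forall y, ~~ e x y} -> independent A -> independent (x |: A).
Proof.
move=> nxA /independentP iA; apply/independentP.
move=> y z /setU1P[-> | yA] /setU1P[-> | zA]; rewrite ?e_irr ?nxA //.
  by rewrite e_sym nxA.
exact: iA.
Qed.

Lemma independent2 x y : ~~ e x y -> independent [set x; y].
Proof.
by move=> nxy; apply: independentU1 => [z /set1P -> | ]; last exact: independent1.
Qed.

Lemma induced_bipartite_split (S X : {set T}) :
  independent (S :&: X) -> independent (S :\: X) -> induced_bipartite e S.
Proof.
move=> /independentP iSX /independentP iSnX.
apply/induced_bipartiteP; exists (mem X) => x y xS yS.
apply: contraTneq => /= eqXxy.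
by case: (boolP (x \in X)) eqXxy => xX yX; [apply: iSX | apply: iSnX];
  rewrite !inE ?xS ?yS -?yX ?xX.
Qed.

Lemma induced_bipartiteU (A B : {set T}) :
  independent A -> independent B -> induced_bipartite e (A :|: B).
Proof.
move=> iA iB; apply: (induced_bipartite_split (X := A)); first by rewrite setUK.
by apply: independentS iB; rewrite setDUl setDv set0U subsetDl.
Qed.

Lemma independentU_card_le_bip_num (A B : {set T}) :
  [disjoint A & B] -> independent A -> independent B -> #|A| + #|B| <= bip_num e.
Proof.
move=> dAB iA iB; have /eqP <- : #|A :|: B| == #|A| + #|B|.
  by rewrite (leq_card_setU A B).2.
exact/card_le_bip_num/induced_bipartiteU.
Qed.

Section Forward.
Hypotheses (conn : connected_graph e) (b3 : bip_num e = 3).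

Lemma three_le_card : 3 <= #|T|.
Proof. by rewrite -b3; apply: bip_num_le => S _; apply: max_card. Qed.

Lemma exists_nonedge : exists a b, a != b /\ ~~ e a b.
Proof.
case: (pickP (fun ab : T * T => (ab.1 != ab.2) && ~~ e ab.1 ab.2)) =>
  [[a b] /andP[ab nab] | complete]; first by exists a, b.
have adj x y : x != y -> e x y.
  by move=> xy; move: (complete (x, y)); rewrite /= xy => /negbFE.
suff : bip_num e <= 2 by rewrite b3.
apply: bip_num_le => S bS; rewrite leqNgt; apply/negP.
case/card_gt2P => [x [y [z [[xS yS zS] [xy yz zx]]]]].
by apply: (induced_bipartite_triangle bS xS yS zS); apply: adj; rewrite // eq_sym.
Qed.

Lemma nonedges_meet a b c d : a != b -> ~~ e a b -> c != d -> ~~ e c d ->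
  [|| a == c, a == d, b == c | b == d].
Proof.
move=> ab nab cd ncd; apply/negPn/negP; rewrite !negb_or => /and4P[ac ad bc bd].
suff : #|[set a; b]| + #|[set c; d]| <= bip_num e by rewrite b3 !cards2 ab cd.
apply: independentU_card_le_bip_num; try exact: independent2.
rewrite disjoints_subset; apply/subsetP => x /set2P[]->;
  by rewrite !inE negb_or ?ac ?ad ?bc ?bd.
Qed.

Lemma no_independent_triple a b c : a != b -> b != c -> a != c ->
  ~~ e a b -> ~~ e b c -> ~~ e a c -> False.
Proof.
move=> ab bc ac nab nbc nac; have [d ead] := connected_neighbour conn ab.
suff : #|a |: [set b; c]| + #|[set d]| <= bip_num e.
  by rewrite b3 cards1 cardsU1 cards2 bc !inE (negbTE ab) (negbTE ac).
apply: independentU_card_le_bip_num; last exact: independent1.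
- rewrite disjoint_sym disjoints1 !inE; apply/or3P => -[] /eqP da;
    by move: ead; rewrite da ?e_irr ?(negbTE nab) ?(negbTE nac).
- by apply: independentU1 => [z /set2P[]-> // | ]; apply: independent2.
Qed.

Lemma nonedge_center :
  exists p, forall x y, x != y -> ~~ e x y -> (x == p) || (y == p).
Proof.
have [p [q [pq npq]]] := exists_nonedge.
case: (pickP (fun s => [&& s != p, s != q & ~~ e p s])) => [s /and3P[sp sq nps] | Np].
  exists p => x y xy nxy; apply/negPn/negP; rewrite negb_or => /andP[xp yp].
  have := nonedges_meet xy nxy pq npq; rewrite (negbTE xp) (negbTE yp) /= => xyq.
  have ps : p != s by rewrite eq_sym.
  have := nonedges_meet xy nxy ps nps; rewrite (negbTE xp) (negbTE yp) /= => xys.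
  have nqs : ~~ e q s.
    by case/orP: xyq xys => /eqP ?; subst; case/orP => /eqP ?; subst;
      rewrite ?e_irr // e_sym.
  by apply: (no_independent_triple pq _ _ npq nqs nps); rewrite eq_sym.
exists q => x y xy nxy; apply/negPn/negP; rewrite negb_or => /andP[xq yq].
have := nonedges_meet xy nxy pq npq; rewrite (negbTE xq) (negbTE yq) !orbF.
case/orP => /eqP ?; subst.
  by have := Np y; rewrite eq_sym xy yq nxy.
by have := Np x; rewrite xy xq e_sym nxy.
Qed.

Hypothesis wb : well_bicovered e.

Lemma unique_universal x y :
  (forall z, z != x -> e x z) -> (forall z, z != y -> e y z) -> x = y.
Proof.
move=> xU yU; case: (eqVneq x y) => // xy; exfalso.
have [a [b [ab nab]]] := exists_nonedge.
have [r] : exists r, r \notin [set a; b].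
  by apply: exists_notin; rewrite cards2 ab; apply: three_le_card.
rewrite !inE negb_or => /andP[ra rb].
have card_rab : #|r |: [set a; b]| = 3.
  by rewrite cardsU1 cards2 ab !inE (negbTE ra) (negbTE rb).
have max_rab : maximal_bipartite e (r |: [set a; b]).
  apply: maximal_bipartite_card; last by rewrite card_rab b3.
  by apply: induced_bipartiteU; [apply: independent1 | apply: independent2].
have max_xy : maximal_bipartite e [set x; y].
  split=> [|S sxyS bS]; first by apply: induced_bipartiteU; apply: independent1.
  apply/eqP; rewrite eqEsubset sxyS andbT; apply/subsetP => z zS.
  apply: contraT; rewrite !inE negb_or => /andP[zx zy].
  have [xS yS] : x \in S /\ y \in S.
    by split; apply: (subsetP sxyS); rewrite !inE eqxx ?orbT.
  by case: (induced_bipartite_triangle bS xS yS zS); rewrite ?xU ?yU // eq_sym.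
by have := wb max_xy max_rab; rewrite card_rab cards2 xy.
Qed.

Lemma clique_pendant_of_well_bicovered : exists p u, p != u /\ e =2 clique_pendant p u.
Proof.
have [p center] := nonedge_center.
have adj x y : x != p -> y != p -> x != y -> e x y.
  move=> xp yp xy; apply: contraT => nxy.
  by have := center x y xy nxy; rewrite (negbTE xp) (negbTE yp).
have [q] : exists q, q \notin [set p].
  by apply: exists_notin; rewrite cards1 (leq_trans _ three_le_card).
rewrite inE eq_sym => pq; have [u epu] := connected_neighbour conn pq.
have universal v : e p v -> forall z, z != v -> e v z.
  move=> epv z zv; have [->|zp] := eqVneq z p; first by rewrite e_sym.
  have vp : v != p by apply: contraTneq epv => ->; rewrite e_irr.
  by apply: adj; rewrite // eq_sym.
have ep v : e p v = (v == u).
  by apply/idP/eqP=> [epv | ->//]; apply: unique_universal; apply: universal.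
have pu : p != u by apply: contraTneq epu => <-; rewrite e_irr.
exists p, u; split=> // x y; rewrite /clique_pendant.
have [<-|xy] := eqVneq x y; first by rewrite e_irr.
have [->|xp] := eqVneq x p; first exact: ep.
have [->|yp] := eqVneq y p; first by rewrite e_sym ep.
exact: adj.
Qed.

End Forward.

Section CliquePendant.
Variables (p u : T).
Hypotheses (eE : e =2 clique_pendant p u) (T3 : 2 < #|T|).

Lemma clique_pendant_edge x y : x != p -> y != p -> e x y = (x != y).
Proof. by move=> xp yp; rewrite eE /clique_pendant (negbTE xp) (negbTE yp) andbT. Qed.

Lemma induced_bipartite_clique_pendant (S : {set T}) :
  induced_bipartite e S = (#|S :\ p| <= 2).
Proof.
apply/idP/idP => [bS | le2].
  rewrite leqNgt; apply/negP => /card_gt2P[x [y [z [[]]]]].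
  rewrite !inE => /andP[xp xS] /andP[yp yS] /andP[zp zS] [xy yz zx].
  apply: (induced_bipartite_triangle bS xS yS zS);
    by rewrite clique_pendant_edge // eq_sym.
(* Colour p together with a vertex w of S other than p and u, if there is one. *)
case: (pickP (fun w => w \in S :\: [set p; u])) => [w | noW].
  rewrite !inE negb_or => /andP[/andP[wp wu] wS].
  have npw : ~~ e p w by rewrite eE /clique_pendant eqxx (negbTE wu) andbF.
  apply: (induced_bipartite_split (X := [set p; w])).
    exact: independentS (subsetIr _ _) (independent2 npw).
  apply: independent_card_le1; rewrite -setDDl.
  have wSp : w \in S :\ p by rewrite !inE wp wS.
  by move: le2; rewrite (cardsD1 w) wSp.
apply: (induced_bipartite_split (X := [set p])).
  exact: independentS (subsetIr _ _) (independent1 p).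
apply: independentS (independent1 u); apply/subsetP => x; rewrite !inE => /andP[xp xS].
by move: (noW x); rewrite !inE (negbTE xp) xS andbT => /negbFE.
Qed.

Lemma maximal_bipartite_clique_pendant (S : {set T}) : maximal_bipartite e S -> #|S| = 3.
Proof.
move=> maxS; have := maxS.1; rewrite induced_bipartite_clique_pendant => le2.
have pS : p \in S.
  apply: (maximal_bipartite_setU1 maxS).
  by rewrite induced_bipartite_clique_pendant setDUl setDv set0U.
suff Sp2 : #|S :\ p| = 2 by rewrite (cardsD1 p) pS Sp2.
apply/eqP; rewrite eqn_leq le2 ltnNge; apply/negP => le1.
have [z zNS] : exists z, z \notin S.
  by apply: exists_notin; rewrite (cardsD1 p) pS (leq_ltn_trans _ T3).
case/negP: zNS; apply: (maximal_bipartite_setU1 maxS).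
rewrite induced_bipartite_clique_pendant setDUl.
apply: leq_trans (leq_card_setU _ _).1 _; rewrite -[2]/(1 + 1) leq_add //.
by rewrite -(cards1 z) subset_leq_card ?subsetDl.
Qed.

Lemma well_bicovered_clique_pendant : well_bicovered e /\ bip_num e = 3.
Proof.
split=> [S1 S2 /maximal_bipartite_clique_pendant -> |].
  by move/maximal_bipartite_clique_pendant ->.
by have [S [/maximal_bipartite_clique_pendant <- ->]] := exists_maximal_bipartite e.
Qed.

End CliquePendant.

End SimpleGraph.

Lemma clique_pendant_inj (T U : finType) (phi : T -> U) (p u x y : T) :
  injective phi ->
  clique_pendant (phi p) (phi u) (phi x) (phi y) = clique_pendant p u x y.
Proof. by move=> phi_inj; rewrite /clique_pendant !(inj_eq phi_inj). Qed.

Lemma Kn_pendantE n : Kn_pendant n =2 clique_pendant ord_max ord0.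
Proof.
move=> i j; rewrite /Kn_pendant /clique_pendant.
have ltn_max (k : 'I_n.+1) : (k < n) = (k != ord_max).
  by rewrite -val_eqE /= ltn_neqAle -ltnS ltn_ord andbT.
have maxE (k : 'I_n.+1) : (k == n :> nat) = (k == ord_max) by [].
have zeroE (k : 'I_n.+1) : (k == 0 :> nat) = (k == ord0) by [].
rewrite !ltn_max !maxE !zeroE.
by have [-> | iNmax] := eqVneq i ord_max; have [-> | jNmax] := eqVneq j ord_max;
  rewrite ?eqxx /= ?orbF.
Qed.

Lemma exists_inj_pair (T U : finType) (p u : T) (p' u' : U) :
  #|T| <= #|U| -> p != u -> p' != u' ->
  exists2 phi : T -> U, injective phi & phi p = p' /\ phi u = u'.
Proof.
move=> leTU pu pu'.
pose f x := enum_val (widen_ord leTU (enum_rank x)).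
have f_inj : injective f.
  by move=> x y /enum_val_inj /(congr1 val) /= /val_inj /enum_rank_inj.
pose t1 := tperm (f p) p'; pose t2 := tperm (t1 (f u)) u'.
exists (t2 \o t1 \o f) => [x y /perm_inj /perm_inj /f_inj // | /=].
have t1u : t1 (f u) != p'.
  by rewrite -(tpermL (f p) p') (inj_eq perm_inj) (inj_eq f_inj) eq_sym.
split; last exact: tpermL.
by rewrite {1}/t1 tpermL tpermD // eq_sym.
Qed.

Lemma isomorphic_Kn_pendant (T : finType) (e : rel T) :
  (exists n, 2 <= n /\ isomorphic e (Kn_pendant n)) <->
  (exists p u, [/\ p != u, e =2 clique_pendant p u & 2 < #|T|]).
Proof.
split=> [[n [n2 [phi [[psi phiK psiK] eE]]]] | [p [u [pu eE T3]]]].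
  exists (psi ord_max), (psi ord0); split.
  - by rewrite (can_eq psiK) -val_eqE /= -lt0n (ltnW n2).
  - move=> x y; rewrite eE Kn_pendantE.
    by rewrite -(clique_pendant_inj _ _ _ _ (can_inj phiK)) !psiK.
  - by rewrite (bij_eq_card (Bijective phiK psiK)) card_ord.
have [n cardT] : exists n, #|T| = n.+1.
  by exists #|T|.-1; rewrite prednK // (ltn_trans _ T3).
have max0 : ord_max != ord0 :> 'I_n.+1.
  by rewrite -val_eqE /= -lt0n -ltnS -cardT ltnW.
have [|phi phi_inj [phip phiu]] := exists_inj_pair _ pu max0.
  by rewrite card_ord cardT.
exists n; split; first by rewrite -ltnS -cardT.
exists phi; split; first by apply: inj_card_bij; rewrite // card_ord cardT.
by move=> x y; rewrite eE Kn_pendantE -phip -phiu clique_pendant_inj.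
Qed.

Theorem mainTheorem8 (T : finType) (e : rel T)
  (e_sym : symmetric e) (e_irr : irreflexive e) :
  connected_graph e ->
  ((well_bicovered e /\ bip_num e = 3) <->
   exists n : nat, 2 <= n /\ isomorphic e (Kn_pendant n)).
Proof.
move=> conn; split=> [[wb b3] | /isomorphic_Kn_pendant[p [u [_ eE T3]]]].
  apply/isomorphic_Kn_pendant.
  have [p [u [pu eE]]] := clique_pendant_of_well_bicovered e_sym e_irr conn b3 wb.
  by exists p, u; split=> //; apply: three_le_card b3.
exact: (well_bicovered_clique_pendant e_sym e_irr eE T3).
Qed.
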